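(* Let $k\ge1$ be an integer, let $V,E,V_*$ be groups, and let $f,g:E\to V$ and $h_i:V\to V_*$ ($i\in\mathbb{Z}/k$) be injective homomorphisms. Let $H=\langle V,t\mid t^{-1}f(e)t=g(e)\ (e\in E)\rangle$ be the HNN-extension, and let $\rho:H\to\mathbb{Z}/k$ be the homomorphism with $\rho(V)=0$ and $\rho(t)=1$, with kernel $K$. Let $\Pi_k$ be the fundamental group of the graph of groups on the directed $k$-cycle with vertices $i\in\mathbb{Z}/k$ and edges $(i,i+1)$, with vertex groups $V_i$ copies of $V$, edge groups $E_i$ copies of $E$, and attaching maps $f_i:E_i\to V_i$, $g_i:E_i\to V_{i+1}$ copies of $f,g$. Let $G_*$ be the group obtained from the free product of $V_*$ with free generators $t_i$ ($i\in\mathbb{Z}/k$) by imposing the relations $t_i^{-1}h_i(f(e))t_i=h_{i+1}(g(e))$ for all $i\in\mathbb{Z}/k$, $e\in E$ (the fundamental group of the graph of groups on the $k$-leaved rose with vertex group $V_*$, edge groups $E_i$ and attaching maps $h_i\circ f_i$, $h_{i+1}\circ g_i$). Then $K\cong\Pi_k$, and $K$ embeds in $G_*$.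
   Context: For a graph of groups with underlying connected directed graph, vertex groups $G_v$, edge groups $G_e$ and injective attaching maps $\iota_e:G_e\to G_{\iota(e)}$, $\tau_e:G_e\to G_{\tau(e)}$, its fundamental group (relative to a spanning tree $T$) is the free product of the $G_v$ and infinite cyclic groups $\langle t_e\rangle$ for edges $e\notin T$, modulo $\iota_e(x)=\tau_e(x)$ for $e\in T$ and $t_e^{-1}\iota_e(x)t_e=\tau_e(x)$ for $e\notin T$, $x\in G_e$; its isomorphism type is independent of $T$. *)

(* Abstract (possibly infinite) groups are encoded by an explicit record. *)
From HB Require Import structures.
From mathcomp Require Import all_boot all_algebra.
Set Implicit Arguments. Unset Strict Implicit. Unset Printing Implicit Defensive.

Record Grp := {
  gcar :> Type;
  gmul : gcar -> gcar -> gcar;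
  gone : gcar;
  ginv : gcar -> gcar;
  gmulA : forall x y z, gmul x (gmul y z) = gmul (gmul x y) z;
  gmul1 : forall x, gmul gone x = x;
  gmulV : forall x, gmul (ginv x) x = gone
}.
Arguments gmul {g}. Arguments gone {g}. Arguments ginv {g}.

Definition is_hom (A B : Grp) (f : A -> B) : Prop :=
  forall x y, f (gmul x y) = gmul (f x) (f y).

Definition gconj (G : Grp) (x t : G) : G := gmul (gmul (ginv t) x) t.

(* Z/k for k = n.+1, as the additive group of 'I_n.+1 *)
Definition Zk (n : nat) : Grp :=
  @Build_Grp 'I_n.+1 (fun x y => (x + y)%R) 0%R (fun x => (- x)%R)
    (fun x y z => GRing.addrA x y z) (fun x => GRing.add0r x)
    (fun x => GRing.addNr x).

Definition succ (n : nat) (i : 'I_n.+1) : 'I_n.+1 := (i + Zp1)%R.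

(* H is the HNN extension <V, t | t^-1 f(e) t = g(e)>, given by its
   universal property (it is the presentation group, up to unique iso). *)
Definition is_HNN (V E H : Grp) (f g : E -> V) (iV : V -> H) (t : H) : Prop :=
  is_hom iV /\
  (forall e, gconj (iV (f e)) t = iV (g e)) /\
  forall (X : Grp) (phi : V -> X) (s : X),
    is_hom phi -> (forall e, gconj (phi (f e)) s = phi (g e)) ->
    exists psi : H -> X,
      [/\ is_hom psi, (forall v, psi (iV v) = phi v), psi t = s &
        forall psi' : H -> X, is_hom psi' -> (forall v, psi' (iV v) = phi v) ->
          psi' t = s -> forall x, psi' x = psi x].

(* Pi is the fundamental group of the graph of groups on the directed cycle
   with vertices i in Z/k, edges (i,i+1), vertex groups V, edge groups E,
   attaching maps f (into V_i) and g (into V_{i+1}); computed w.r.t. the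
   spanning tree consisting of all edges (i,i+1) with i <> k-1, the edge
   (k-1,0) carrying the stable letter t. *)
Definition is_cycle_pi1 (n : nat) (V E P : Grp) (f g : E -> V)
    (iV : 'I_n.+1 -> V -> P) (t : P) : Prop :=
  (forall i, is_hom (iV i)) /\
  (forall (i : 'I_n.+1) e, i != ord_max -> iV i (f e) = iV (succ i) (g e)) /\
  (forall e, gconj (iV ord_max (f e)) t = iV (succ ord_max) (g e)) /\
  forall (X : Grp) (phi : 'I_n.+1 -> V -> X) (s : X),
    (forall i, is_hom (phi i)) ->
    (forall (i : 'I_n.+1) e, i != ord_max -> phi i (f e) = phi (succ i) (g e)) ->
    (forall e, gconj (phi ord_max (f e)) s = phi (succ ord_max) (g e)) ->
    exists psi : P -> X,
      [/\ is_hom psi, (forall i v, psi (iV i v) = phi i v), psi t = s &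
        forall psi' : P -> X, is_hom psi' -> (forall i v, psi' (iV i v) = phi i v) ->
          psi' t = s -> forall x, psi' x = psi x].

(* G is (V_* * F(t_i : i in Z/k)) / << t_i^-1 h_i(f e) t_i = h_{i+1}(g e) >>,
   given by its universal property. *)
Definition is_rose_pi1 (n : nat) (V E W G : Grp) (f g : E -> V)
    (h : 'I_n.+1 -> V -> W) (iW : W -> G) (t : 'I_n.+1 -> G) : Prop :=
  is_hom iW /\
  (forall i e, gconj (iW (h i (f e))) (t i) = iW (h (succ i) (g e))) /\
  forall (X : Grp) (phi : W -> X) (s : 'I_n.+1 -> X),
    is_hom phi ->
    (forall i e, gconj (phi (h i (f e))) (s i) = phi (h (succ i) (g e))) ->
    exists psi : G -> X,
      [/\ is_hom psi, (forall w, psi (iW w) = phi w), (forall i, psi (t i) = s i) &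
        forall psi' : G -> X, is_hom psi' -> (forall w, psi' (iW w) = phi w) ->
          (forall i, psi' (t i) = s i) -> forall x, psi' x = psi x].

From Stdlib Require Import ClassicalEpsilon FunctionalExtensionality PropExtensionality ProofIrrelevance.
From HB Require Import structures.
From mathcomp Require Import all_boot all_algebra.
Set Implicit Arguments. Unset Strict Implicit. Unset Printing Implicit Defensive.

(* Part 1: K is isomorphic to Pi_k.  phi : Pi_k -> H sends the i-th copy of
   v to t^i v t^-i and the stable letter to t^k.  Every element of H has the form
   phi(p) t^j with 0 <= j < k, so phi maps onto K.  H acts on the right on
   Pi_k * Z/k by right multiplication on these normal forms, and phi(x) acts
   on (q, 0) as (q, 0) |-> (q x, 0); hence phi is injective.

   Psi : Pi_k -> G_* sends the i-th copy of v to
   T_i h_i(v) T_i^-1 (T_i = t_0 ... t_(i-1)) and the stable letter to T_k.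
   G_* acts on reduced words (normal forms with respect to chosen coset
   representatives of the edge groups); decoding words based at vertex 0
   into Pi_k turns the action of Psi(x) into left multiplication by x, so Psi
   is injective.  Finally Psi composed with phi^-1 embeds K in G_*. *)

Declare Scope grp_scope.
Delimit Scope grp_scope with grp.
Notation "x * y" := (gmul x y) : grp_scope.
Notation "x ^-1" := (ginv x) : grp_scope.
Open Scope grp_scope.

Section GroupTheory.
Variable X : Grp.
Implicit Types x y z : X.

Lemma gmulKg x y : x^-1 * (x * y) = y.
Proof. by rewrite gmulA gmulV gmul1. Qed.

Lemma gmul_cancl x y z : x * y = x * z -> y = z.
Proof. by move=> e; rewrite -(gmulKg x y) e gmulKg. Qed.

Lemma gmulgV x : x * x^-1 = gone.
Proof.
rewrite -{1}[x * x^-1]gmul1 -{1}(gmulV x^-1) -gmulA (gmulA x^-1) gmulV gmul1.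
exact: gmulV.
Qed.

Lemma gmulg1 x : x * gone = x.
Proof. by rewrite -(gmulV x) gmulA gmulgV gmul1. Qed.

Lemma gmulKVg x y : x * (x^-1 * y) = y.
Proof. by rewrite gmulA gmulgV gmul1. Qed.

Lemma gmulgK x y : y * x * x^-1 = y.
Proof. by rewrite -gmulA gmulgV gmulg1. Qed.

Lemma gmulgKV x y : y * x^-1 * x = y.
Proof. by rewrite -gmulA gmulV gmulg1. Qed.

Lemma ginv_uniq x y : x * y = gone -> y = x^-1.
Proof. by move=> e; apply: (@gmul_cancl x); rewrite e gmulgV. Qed.

Lemma ginvK x : x^-1^-1 = x.
Proof. by symmetry; apply: ginv_uniq; rewrite gmulV. Qed.

Lemma ginvM x y : (x * y)^-1 = y^-1 * x^-1.
Proof. by symmetry; apply: ginv_uniq; rewrite -gmulA (gmulA y) gmulgV gmul1 gmulgV. Qed.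

Lemma ginv1 : (gone : X)^-1 = gone.
Proof. by symmetry; apply: ginv_uniq; rewrite gmulg1. Qed.
End GroupTheory.

Ltac gnorm := repeat progress rewrite ?ginvM ?ginvK ?ginv1 -?gmulA ?gmul1 ?gmulg1
  ?gmulKg ?gmulKVg ?gmulgV ?gmulV.

Section Homomorphisms.
Variables (X Y : Grp) (phi : X -> Y) (phi_hom : is_hom phi).

Lemma hom1 : phi gone = gone.
Proof. by apply: (@gmul_cancl _ (phi gone)); rewrite -phi_hom !gmulg1. Qed.

Lemma homV x : phi x^-1 = (phi x)^-1.
Proof. by apply: ginv_uniq; rewrite -phi_hom gmulgV hom1. Qed.
End Homomorphisms.

Lemma is_hom_comp (X Y Z : Grp) (phi : X -> Y) (psi : Y -> Z) :
  is_hom phi -> is_hom psi -> is_hom (fun x => psi (phi x)).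
Proof. by move=> hphi hpsi x y; rewrite hphi hpsi. Qed.

Record bijection (T : Type) := Bijection {
  bfun : T -> T; binv : T -> T;
  bfunK : forall x, binv (bfun x) = x;
  binvK : forall x, bfun (binv x) = x }.

Lemma bij_ext T (p q : bijection T) : (forall x, bfun p x = bfun q x) -> p = q.
Proof.
case: p q => f1 g1 K1 K1' [f2 g2 K2 K2'] /= e.
have ef : f1 = f2 by apply: functional_extensionality.
subst f2.
have eg : g1 = g2 by apply: functional_extensionality => x; rewrite -{1}(K2' x) K1.
by subst g2; f_equal; apply: proof_irrelevance.
Qed.

Definition bij_comp T (p q : bijection T) : bijection T.
refine (@Bijection T (fun x => bfun p (bfun q x)) (fun x => binv q (binv p x)) _ _).
- by move=> x; rewrite !bfunK.
- by move=> x; rewrite !binvK.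
Defined.

Definition bij_id T : bijection T :=
  @Bijection T id id (fun _ => erefl) (fun _ => erefl).

Definition bij_inv T (p : bijection T) : bijection T :=
  @Bijection T (binv p) (bfun p) (binvK p) (bfunK p).

Definition Bij (T : Type) : Grp.
refine (@Build_Grp (bijection T) (@bij_comp T) (bij_id T) (@bij_inv T) _ _ _).
- by move=> x y z; apply: bij_ext.
- by move=> x; apply: bij_ext.
- by move=> x; apply: bij_ext => y /=; rewrite bfunK.
Defined.

(* The opposite group; homomorphisms into opp (Bij T) are right actions. *)
Definition opp (X : Grp) : Grp.
refine (@Build_Grp X (fun x y => y * x) gone ginv _ _ _).
- by move=> x y z; rewrite gmulA.
- exact: gmulg1.
- exact: gmulgV.
Defined.

(* A choice of preimage of b under F (default a0 when there is none). *)
Definition preim {A B : Type} (a0 : A) (F : A -> B) (b : B) : A :=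
  match excluded_middle_informative (exists a, F a = b) with
  | left ex => proj1_sig (constructive_indefinite_description _ ex)
  | right _ => a0
  end.

Lemma preimP A B (a0 : A) (F : A -> B) b : (exists a, F a = b) -> F (preim a0 F b) = b.
Proof.
rewrite /preim => ex; case: excluded_middle_informative => // ex'.
by case: constructive_indefinite_description.
Qed.

Lemma preimK A B (a0 : A) (F : A -> B) a : injective F -> preim a0 F (F a) = a.
Proof. by move=> F_inj; apply: F_inj; apply: preimP; exists a. Qed.

Section Subgroup.
Variables (X : Grp) (S : X -> Prop) (S1 : S gone)
  (SM : forall x y, S x -> S y -> S (x * y)) (SV : forall x, S x -> S x^-1).

Definition sub_elt := {x : X | S x}.

Lemma sub_eq (a b : sub_elt) : proj1_sig a = proj1_sig b -> a = b.
Proof. by case: a b => x p [y q] /= e; subst y; f_equal; apply: proof_irrelevance. Qed.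

Definition subgrp : Grp.
refine (@Build_Grp sub_elt
  (fun a b => exist _ _ (SM (proj2_sig a) (proj2_sig b)))
  (exist _ _ S1) (fun a => exist _ _ (SV (proj2_sig a))) _ _ _).
- by move=> a b c; apply: sub_eq; rewrite /= gmulA.
- by move=> a; apply: sub_eq; rewrite /= gmul1.
- by move=> a; apply: sub_eq; rewrite /= gmulV.
Defined.
End Subgroup.

Section CyclicIndices.
Variable n : nat.
Implicit Types i j : 'I_n.+1.

Definition prec i : 'I_n.+1 := (i - Zp1)%R.

Lemma succK : cancel (@succ n) prec.
Proof. by move=> i; rewrite /prec /succ GRing.addrK. Qed.

Lemma precK : cancel prec (@succ n).
Proof. by move=> i; rewrite /prec /succ GRing.subrK. Qed.

Lemma val_succ i : val (succ i) = (i.+1 %% n.+1)%N.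
Proof. by rewrite /succ /= /Zp1 /= modnDmr addn1. Qed.

Lemma succ_max : succ (@ord_max n) = ord0.
Proof. by apply: val_inj; rewrite val_succ /= modnn. Qed.

Lemma prec0 : prec ord0 = @ord_max n.
Proof. by rewrite -succ_max succK. Qed.

Lemma succ_eq0 i : (succ i == ord0) = (i == ord_max).
Proof. by rewrite -succ_max (can_eq succK). Qed.

Lemma prec_eqmax i : (prec i == ord_max) = (i == ord0).
Proof. by rewrite -prec0 (can_eq precK). Qed.

Lemma succ_lt i : i != ord_max -> val (succ i) = i.+1.
Proof.
move=> ne; rewrite val_succ modn_small //.
have := ltn_ord i; rewrite ltnS leq_eqVlt => /orP [/eqP e|] //.
by case/negP: ne; apply/eqP/val_inj.
Qed.

Lemma inord0 : inord 0 = @ord0 n.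
Proof. by apply: val_inj; rewrite /= inordK. Qed.

Lemma inord_max : inord n = @ord_max n.
Proof. by apply: val_inj; rewrite /= inordK. Qed.

Lemma inord_lt_max m : (m < n)%N -> (inord m : 'I_n.+1) != ord_max.
Proof.
move=> lt; apply/eqP => /(congr1 val); rewrite /= (inordK (ltnW lt)) => e.
by move: lt; rewrite e ltnn.
Qed.

Lemma succ_inord m : (m < n)%N -> succ (inord m : 'I_n.+1) = inord m.+1.
Proof.
move=> lt; apply: val_inj; rewrite succ_lt ?inord_lt_max //.
by rewrite /= (inordK (ltnW lt)) inordK.
Qed.
End CyclicIndices.

Arguments succ : simpl never.

Section UniversalProperties.
Variables (n : nat) (V E : Grp) (f g : E -> V).

Lemma hnn_lift (H : Grp) (iV : V -> H) (t : H) (HH : is_HNN f g iV t)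
    (X : Grp) (phi : V -> X) (s : X) :
  is_hom phi -> (forall e, gconj (phi (f e)) s = phi (g e)) ->
  exists psi : H -> X, [/\ is_hom psi, forall v, psi (iV v) = phi v & psi t = s].
Proof.
case: HH => _ [_ up] phi_hom rel.
by have [psi [? ? ? _]] := up X phi s phi_hom rel; exists psi.
Qed.

Lemma cycle_lift (P : Grp) (jV : 'I_n.+1 -> V -> P) (tP : P)
    (HP : is_cycle_pi1 f g jV tP) (X : Grp) (phi : 'I_n.+1 -> V -> X) (s : X) :
  (forall i, is_hom (phi i)) ->
  (forall (i : 'I_n.+1) e, i != ord_max -> phi i (f e) = phi (succ i) (g e)) ->
  (forall e, gconj (phi ord_max (f e)) s = phi (succ ord_max) (g e)) ->
  exists psi : P -> X, [/\ is_hom psi, forall i v, psi (jV i v) = phi i v & psi tP = s].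
Proof.
case: HP => _ [_ [_ up]] phi_hom tree stable.
by have [psi [? ? ? _]] := up X phi s phi_hom tree stable; exists psi.
Qed.

Lemma rose_lift (Vs : Grp) (h : 'I_n.+1 -> V -> Vs) (G : Grp) (iW : Vs -> G)
    (tG : 'I_n.+1 -> G) (HG : is_rose_pi1 f g h iW tG) (X : Grp) (phi : Vs -> X)
    (s : 'I_n.+1 -> X) :
  is_hom phi -> (forall i e, gconj (phi (h i (f e))) (s i) = phi (h (succ i) (g e))) ->
  exists psi : G -> X,
    [/\ is_hom psi, forall w, psi (iW w) = phi w & forall i, psi (tG i) = s i].
Proof.
case: HG => _ [_ up] phi_hom rel.
by have [psi [? ? ? _]] := up X phi s phi_hom rel; exists psi.
Qed.

Lemma hnn_uniq (H : Grp) (iV : V -> H) (t : H) (HH : is_HNN f g iV t)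
    (X : Grp) (a b : H -> X) : is_hom a -> is_hom b ->
  (forall v, a (iV v) = b (iV v)) -> a t = b t -> forall x, a x = b x.
Proof.
case: HH => iV_hom [rel up] a_hom b_hom eV et.
have [||psi [_ _ _ uniq]] := up X (fun v => b (iV v)) (b t).
- exact: is_hom_comp.
- by move=> e; rewrite -rel /gconj !b_hom (homV b_hom).
by move=> x; rewrite (uniq a) // (uniq b).
Qed.

Lemma cycle_uniq (P : Grp) (jV : 'I_n.+1 -> V -> P) (tP : P)
    (HP : is_cycle_pi1 f g jV tP) (X : Grp) (a b : P -> X) : is_hom a -> is_hom b ->
  (forall i v, a (jV i v) = b (jV i v)) -> a tP = b tP -> forall x, a x = b x.
Proof.
case: HP => jV_hom [tree [stable up]] a_hom b_hom eV et.
have [|||psi [_ _ _ uniq]] := up X (fun i v => b (jV i v)) (b tP).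
- by move=> i; apply: is_hom_comp.
- by move=> i e ne; rewrite tree.
- by move=> e; rewrite -stable /gconj !b_hom (homV b_hom).
by move=> x; rewrite (uniq a) // (uniq b).
Qed.

(* A subgroup containing the generators is everything: lift into the
   subgroup and compare the composite with the identity. *)
Lemma hnn_ind (H : Grp) (iV : V -> H) (t : H) (HH : is_HNN f g iV t)
    (S : H -> Prop) : S gone -> (forall x y, S x -> S y -> S (x * y)) ->
  (forall x, S x -> S x^-1) -> (forall v, S (iV v)) -> S t -> forall x, S x.
Proof.
move=> S1 SM SV SiV St.
have [iV_hom [rel _]] := HH.
have [||psi [psi_hom psi_iV psi_t]] :=
  hnn_lift HH (phi := fun v => exist _ (iV v) (SiV v) : subgrp S1 SM SV)
    (s := exist _ t St).
- by move=> x y; apply: sub_eq; rewrite /= iV_hom.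
- by move=> e; apply: sub_eq; rewrite /= -rel.
have psiK := @hnn_uniq H iV t HH H (fun x => proj1_sig (psi x)) id.
move=> x; rewrite -(psiK _ _ _ _ x) ?psi_t //; first exact: proj2_sig.
- by move=> y z; rewrite psi_hom.
- by move=> v; rewrite psi_iV.
Qed.

Lemma cycle_ind (P : Grp) (jV : 'I_n.+1 -> V -> P) (tP : P)
    (HP : is_cycle_pi1 f g jV tP)
    (S : P -> Prop) : S gone -> (forall x y, S x -> S y -> S (x * y)) ->
  (forall x, S x -> S x^-1) -> (forall i v, S (jV i v)) -> S tP -> forall x, S x.
Proof.
move=> S1 SM SV SjV St.
have [jV_hom [tree [stable _]]] := HP.
have [|||psi [psi_hom psi_jV psi_t]] :=
  cycle_lift HP (phi := fun i v => exist _ (jV i v) (SjV i v) : subgrp S1 SM SV)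
    (s := exist _ tP St).
- by move=> i x y; apply: sub_eq; rewrite /= jV_hom.
- by move=> i e ne; apply: sub_eq; rewrite /= tree.
- by move=> e; apply: sub_eq; rewrite /= -stable.
have psiK := @cycle_uniq P jV tP HP P (fun x => proj1_sig (psi x)) id.
move=> x; rewrite -(psiK _ _ _ _ x) ?psi_t //; first exact: proj2_sig.
- by move=> y z; rewrite psi_hom.
- by move=> i v; rewrite psi_jV.
Qed.
End UniversalProperties.

Section KernelOfRho.
Variables (n : nat) (V E : Grp) (f g : E -> V).
Variables (P : Grp) (jV : 'I_n.+1 -> V -> P) (tP : P) (HP : is_cycle_pi1 f g jV tP).
Variables (H : Grp) (iV : V -> H) (t : H) (HH : is_HNN f g iV t).
Local Notation I := 'I_n.+1.

Let jV_hom : forall i, is_hom (jV i). Proof. by case: HP. Qed.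
Let jV_tree : forall (i : I) e, i != ord_max -> jV i (f e) = jV (succ i) (g e).
Proof. by case: HP => _ []. Qed.
Let jV_stable : forall e, gconj (jV ord_max (f e)) tP = jV (succ ord_max) (g e).
Proof. by case: HP => _ [_ []]. Qed.
Let iV_hom : is_hom iV. Proof. by case: HH. Qed.
Let iV_rel : forall e, gconj (iV (f e)) t = iV (g e). Proof. by case: HH => _ []. Qed.

Definition tpow (m : nat) : H := iter m (fun x => x * t) gone.

Definition phi_gen (i : I) (v : V) : H := tpow i * iV v * (tpow i)^-1.

Lemma phi_exists : exists phi : P -> H,
  [/\ is_hom phi, forall i v, phi (jV i v) = phi_gen i v & phi tP = tpow n.+1].
Proof.
have t_fg e : t * iV (g e) * t^-1 = iV (f e) by rewrite -iV_rel /gconj; gnorm.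
apply: (cycle_lift HP (phi := phi_gen)); rewrite /phi_gen.
- by move=> i x y; rewrite iV_hom; gnorm.
- by move=> i e ne; rewrite succ_lt // -(t_fg e) /=; gnorm.
- by move=> e; rewrite succ_max /gconj /= -iV_rel /gconj; gnorm.
Qed.

Variables (phi : P -> H) (phi_hom : is_hom phi)
  (phi_jV : forall i v, phi (jV i v) = phi_gen i v) (phi_tP : phi tP = tpow n.+1).

(* Injectivity of phi: H acts on the right on P * Z/k, the pair (p, j)
   standing for phi(p) t^j; v in V acts by (p, j) |-> (p * v_j, j) and t by
   (p, j) |-> (p, j+1), except (p, k-1) |-> (p * tP, 0). *)
Section RightAction.

Definition vstep (v : V) (s : P * I) : P * I := (s.1 * jV s.2 v, s.2).

Definition tstep (s : P * I) : P * I :=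
  if s.2 == ord_max then (s.1 * tP, ord0) else (s.1, succ s.2).

Definition tstepV (s : P * I) : P * I :=
  if s.2 == ord0 then (s.1 * tP^-1, ord_max) else (s.1, prec s.2).

Lemma vstepK v : cancel (vstep v) (vstep v^-1).
Proof. by case=> p j; rewrite /vstep /= (homV (jV_hom j)) gmulgK. Qed.

Lemma vstepVK v : cancel (vstep v^-1) (vstep v).
Proof. by case=> p j; rewrite /vstep /= (homV (jV_hom j)) gmulgKV. Qed.

Lemma tstepK : cancel tstep tstepV.
Proof.
case=> p j; rewrite /tstep; have [->|ne] := eqVneq j ord_max.
  by rewrite /tstepV /= ?eqxx gmulgK.
by rewrite /tstepV /= succ_eq0 (negPf ne) succK.
Qed.

Lemma tstepVK : cancel tstepV tstep.
Proof.
case=> p j; rewrite /tstepV; have [->|ne] := eqVneq j ord0.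
  by rewrite /tstep /= ?eqxx gmulgKV.
by rewrite /tstep /= prec_eqmax (negPf ne) precK.
Qed.

Definition vbij (v : V) : Bij (P * I) := Bijection (vstepK v) (vstepVK v).
Definition tbij : Bij (P * I) := Bijection tstepK tstepVK.

Lemma ract_exists : exists r : H -> opp (Bij (P * I)),
  [/\ is_hom r, forall v, r (iV v) = vbij v & r t = tbij].
Proof.
apply: (hnn_lift HH (X := opp (Bij (P * I))) (phi := vbij)).
- by move=> x y; apply: bij_ext => -[p j]; rewrite /= /vstep /= jV_hom gmulA.
- move=> e; apply: bij_ext => -[p j] /=; rewrite /tstepV /=.
  have [->|ne] := eqVneq j ord0.
    by rewrite /vstep /tstep /= ?eqxx -succ_max -jV_stable /gconj !gmulA.
  have ne' : prec j != ord_max by rewrite prec_eqmax.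
  by rewrite /vstep /tstep /= (negPf ne') precK (jV_tree _ ne') precK.
Qed.

Variables (r : H -> opp (Bij (P * I))) (r_hom : is_hom r)
  (r_iV : forall v, r (iV v) = vbij v) (r_t : r t = tbij).

Lemma ract1 s : bfun (r gone) s = s.
Proof. by rewrite (hom1 r_hom). Qed.

Lemma ractM x y s : bfun (r (x * y)) s = bfun (r y) (bfun (r x) s).
Proof. by rewrite r_hom. Qed.

Lemma ractV x s : bfun (r x^-1) s = binv (r x) s.
Proof. by rewrite (homV r_hom). Qed.

Lemma ract_tpow m q : (m <= n)%N -> bfun (r (tpow m)) (q, ord0) = (q, inord m).
Proof.
elim: m => [|m IH] le.
  by rewrite ract1 inord0.
rewrite ractM IH ?(ltnW le) // r_t /= /tstep /= (negPf (inord_lt_max le)).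
by rewrite succ_inord.
Qed.

Lemma ract_tpow_full q : bfun (r (tpow n.+1)) (q, ord0) = (q * tP, ord0).
Proof. by rewrite ractM ract_tpow // r_t /= /tstep /= inord_max eqxx. Qed.

Lemma ract_phi x q : bfun (r (phi x)) (q, ord0) = (q * x, ord0).
Proof.
move: x q; apply: (cycle_ind HP).
- by move=> q; rewrite (hom1 phi_hom) ract1 gmulg1.
- by move=> x y Sx Sy q; rewrite phi_hom ractM Sx Sy gmulA.
- move=> x Sx q; rewrite (homV phi_hom) ractV.
  by rewrite -{1}(gmulgKV x q) -Sx bfunK.
- move=> i v q; rewrite phi_jV /phi_gen !ractM ractV.
  have le : (i <= n)%N by rewrite -ltnS.
  have back p : binv (r (tpow i)) (p, i) = (p, ord0).
    by rewrite -[i in (p, i)]inord_val -(ract_tpow p le) bfunK.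
  by rewrite ract_tpow // inord_val r_iV /= /vstep /= back.
- by move=> q; rewrite phi_tP ract_tpow_full.
Qed.

Lemma ract_phi_inj : injective phi.
Proof.
move=> x y e; have := ract_phi x gone; rewrite e ract_phi.
by case; rewrite !gmul1.
Qed.
End RightAction.

Lemma phi_injective : injective phi.
Proof.
have [r [r_hom r_iV r_t]] := ract_exists.
by apply: ract_phi_inj r_hom r_iV r_t.
Qed.

Variables (rho : H -> Zk n) (rho_hom : is_hom rho)
  (rho_iV : forall v, rho (iV v) = 0%R) (rho_t : rho t = Zp1).

Lemma rho_tpow m : val (rho (tpow m)) = (m %% n.+1)%N.
Proof.
elim: m => [|m IH]; first by rewrite /= (hom1 rho_hom) mod0n.
by rewrite /= rho_hom rho_t /= IH modnDm addn1.
Qed.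

Lemma rho_phi y : rho (phi y) = 0%R.
Proof.
move: y; apply: (cycle_ind HP).
- by rewrite (hom1 phi_hom) (hom1 rho_hom).
- by move=> x y Sx Sy; rewrite phi_hom rho_hom Sx Sy /= GRing.addr0.
- by move=> x Sx; rewrite (homV phi_hom) (homV rho_hom) Sx /= GRing.oppr0.
- move=> i v; rewrite phi_jV /phi_gen !rho_hom (homV rho_hom) rho_iV /=.
  by rewrite GRing.addr0 GRing.subrr.
- by apply: val_inj; rewrite phi_tP rho_tpow modnn.
Qed.

Definition phi_tpow_form (x : H) : Prop :=
  exists p (j : nat), (j <= n)%N /\ x = phi p * tpow j.

Lemma form_mul_iV y v : phi_tpow_form y -> phi_tpow_form (y * iV v).
Proof.
case=> p [j [le ->]]; exists (p * jV (inord j) v), j; split=> //.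
by rewrite phi_hom phi_jV /phi_gen inordK //; gnorm.
Qed.

Lemma form_mul_t y : phi_tpow_form y -> phi_tpow_form (y * t).
Proof.
case=> p [j [le ->]]; case: (ltnP j n) => [lt|ge].
  by exists p, j.+1; split=> //; rewrite /= gmulA.
have -> : j = n by apply/eqP; rewrite eqn_leq le ge.
by exists (p * tP), 0%N; split=> //; rewrite phi_hom phi_tP /=; gnorm.
Qed.

Lemma form_mul_tV y : phi_tpow_form y -> phi_tpow_form (y * t^-1).
Proof.
case=> p [[|j] [le ->]].
  exists (p * tP^-1), n; split=> //.
  by rewrite phi_hom (homV phi_hom) phi_tP /=; gnorm.
by exists p, j; split; [apply: ltnW | rewrite /=; gnorm].
Qed.

Lemma phi_tpow_formP x : phi_tpow_form x.
Proof.
suff closed z y : phi_tpow_form y <-> phi_tpow_form (y * z).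
  rewrite -[x]gmul1; apply/(closed x gone); exists gone, 0%N.
  by split=> //; rewrite (hom1 phi_hom) gmulg1.
move: z y; apply: (hnn_ind HH).
- by move=> y; rewrite gmulg1.
- by move=> a b Sa Sb y; rewrite Sa Sb gmulA.
- by move=> a Sa y; rewrite (Sa (y * a^-1)) gmulgKV.
- move=> v y; split; first exact: form_mul_iV.
  by move=> /(@form_mul_iV _ v^-1); rewrite (homV iV_hom) gmulgK.
- move=> y; split; first exact: form_mul_t.
  by move=> /form_mul_tV; rewrite gmulgK.
Qed.

Lemma kernel_in_image x : rho x = 0%R -> exists y, phi y = x.
Proof.
move=> rx; have [p [j [le ex]]] := phi_tpow_formP x; exists p.
have : val (rho x) = 0%N by rewrite rx.
rewrite ex rho_hom rho_phi gmul1 rho_tpow modn_small // => j0.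
by rewrite j0 gmulg1.
Qed.
End KernelOfRho.

Lemma kernel_iso (n : nat) (V E : Grp) (f g : E -> V)
    (P : Grp) (jV : 'I_n.+1 -> V -> P) (tP : P) (HP : is_cycle_pi1 f g jV tP)
    (H : Grp) (iV : V -> H) (t : H) (HH : is_HNN f g iV t)
    (rho : H -> Zk n) (rho_hom : is_hom rho)
    (rho_iV : forall v, rho (iV v) = 0%R) (rho_t : rho t = Zp1) :
  exists phi : P -> H,
    [/\ is_hom phi, injective phi & forall x, rho x = 0%R <-> exists y, phi y = x].
Proof.
have [phi [phi_hom phi_jV phi_tP]] := phi_exists HP HH.
have phi_inj := phi_injective HP HH phi_hom phi_jV phi_tP.
have onto_K := kernel_in_image HP HH phi_hom phi_jV phi_tP rho_hom rho_iV rho_t.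
have into_K := rho_phi HP phi_hom phi_jV phi_tP rho_hom rho_iV rho_t.
exists phi; split=> // x; split; first exact: onto_K.
by case=> y <-; apply: into_K.
Qed.

Section CosetRepresentatives.
Variables (X : Grp) (S : X -> Prop) (S1 : S gone)
  (SM : forall x y, S x -> S y -> S (x * y)) (SV : forall x, S x -> S x^-1).

Definition coset_rep (w : X) : X :=
  match excluded_middle_informative (S w) with
  | left _ => gone
  | right _ => epsilon (inhabits w) (fun r => S (w * r^-1))
  end.

Lemma coset_repP w : S (w * (coset_rep w)^-1).
Proof.
rewrite /coset_rep; case: excluded_middle_informative => Sw.
  by rewrite ginv1 gmulg1.
by apply: (epsilon_spec (inhabits w) (fun r => S (w * r^-1))); exists w; rewrite gmulgV.
Qed.

Lemma S_mull s w : S s -> S (s * w) <-> S w.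
Proof. by move=> Ss; split=> [/(SM (SV Ss))|/(SM Ss)] //; rewrite gmulKg. Qed.

Lemma coset_rep_mull s w : S s -> coset_rep (s * w) = coset_rep w.
Proof.
move=> Ss; rewrite /coset_rep.
case: excluded_middle_informative => Ssw; case: excluded_middle_informative => Sw //.
- by case: Sw; apply/(S_mull _ Ss).
- by case: Ssw; apply/(S_mull _ Ss).
have -> : (fun r => S (s * w * r^-1)) = (fun r => S (w * r^-1)).
  apply: functional_extensionality => r; apply: propositional_extensionality.
  by rewrite -gmulA S_mull.
by rewrite (proof_irrelevance _ (inhabits (s * w)) (inhabits w)).
Qed.

Lemma coset_rep_in s : S s -> coset_rep s = gone.
Proof. by rewrite /coset_rep; case: excluded_middle_informative. Qed.

Lemma coset_rep_id w : coset_rep (coset_rep w) = coset_rep w.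
Proof.
have Sw := coset_repP w; set r := coset_rep w in Sw *.
have er : r = (w * r^-1)^-1 * w by gnorm.
by rewrite {1}er coset_rep_mull //; apply: SV.
Qed.
End CosetRepresentatives.

(* A letter (i, e) stands for
   t_i if e is true and for t_i^-1 otherwise; the defining relation lets
   t_i^e be pushed leftwards past the subgroup h_(dst i e)(fv e (E)) of V_*,
   which it conjugates to h_(src i e)(fv (~~ e) (E)). *)
Section RoseEmbedding.
Variables (n : nat) (V E Vs : Grp) (f g : E -> V) (f_hom : is_hom f) (g_hom : is_hom g)
  (f_inj : injective f) (g_inj : injective g)
  (h : 'I_n.+1 -> V -> Vs) (h_hom : forall i, is_hom (h i))
  (h_inj : forall i, injective (h i)).
Local Notation I := 'I_n.+1.

Definition src (i : I) (e : bool) : I := if e then i else succ i.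
Definition dst (i : I) (e : bool) : I := if e then succ i else i.
Definition fv (e : bool) : E -> V := if e then g else f.

(* The edge group on the right of the letter (i, e), and its transfer to
   the left of the letter. *)
Definition edge_emb (i : I) (e : bool) (x : E) : Vs := h (dst i e) (fv e x).
Definition in_edge (i : I) (e : bool) (w : Vs) : Prop := exists x, edge_emb i e x = w.
Definition transfer (i : I) (e : bool) (w : Vs) : Vs :=
  edge_emb i (~~ e) (preim gone (edge_emb i e) w).

Lemma dst_neg i e : dst i (~~ e) = src i e. Proof. by case: e. Qed.

Lemma edge_emb_hom i e : is_hom (edge_emb i e).
Proof. by apply: is_hom_comp; [case: e | apply: h_hom]. Qed.

Lemma edge_emb_inj i e : injective (edge_emb i e).
Proof. by move=> x y /h_inj; case: e => /=; [apply: g_inj | apply: f_inj]. Qed.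

Lemma transfer_emb i e x : transfer i e (edge_emb i e x) = edge_emb i (~~ e) x.
Proof. by rewrite /transfer preimK //; apply: edge_emb_inj. Qed.

Lemma in_edge1 i e : in_edge i e gone.
Proof. by exists gone; rewrite (hom1 (edge_emb_hom _ _)). Qed.

Lemma in_edgeM i e x y : in_edge i e x -> in_edge i e y -> in_edge i e (x * y).
Proof. by case=> a <- [b <-]; exists (a * b); rewrite edge_emb_hom. Qed.

Lemma in_edgeV i e x : in_edge i e x -> in_edge i e x^-1.
Proof. by case=> a <-; exists a^-1; rewrite (homV (edge_emb_hom _ _)). Qed.

Lemma transfer_in i e s : in_edge i e s -> in_edge i (~~ e) (transfer i e s).
Proof. by case=> x <-; rewrite transfer_emb; exists x. Qed.

Lemma transferK i e s : in_edge i e s -> transfer i (~~ e) (transfer i e s) = s.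
Proof. by case=> x <-; rewrite !transfer_emb negbK. Qed.

Lemma transferM i e s1 s2 : in_edge i e s1 -> in_edge i e s2 ->
  transfer i e (s1 * s2) = transfer i e s1 * transfer i e s2.
Proof. by case=> x <- [y <-]; rewrite -edge_emb_hom !transfer_emb edge_emb_hom. Qed.

Definition rep (i : I) (e : bool) : Vs -> Vs := coset_rep (in_edge i e).

Lemma repP i e w : in_edge i e (w * (rep i e w)^-1).
Proof. exact: coset_repP (@in_edge1 i e) w. Qed.

Lemma rep_mull i e s w : in_edge i e s -> rep i e (s * w) = rep i e w.
Proof. exact: (coset_rep_mull (@in_edgeM i e) (@in_edgeV i e) (s := s)). Qed.

Lemma rep_in i e s : in_edge i e s -> rep i e s = gone.
Proof. exact: coset_rep_in. Qed.

Lemma rep_id i e w : rep i e (rep i e w) = rep i e w.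
Proof. exact: coset_rep_id (@in_edge1 i e) (@in_edgeM i e) (@in_edgeV i e) w. Qed.

(* A word (w, [:: (i1, e1, r1); ...]) stands for w * t_i1^e1 * r1 * ...; it is
   reduced when every r is the chosen representative of its coset for the
   preceding letter and no letter t^e with r = 1 is followed by t^-e. *)
Definition syllable := (I * bool * Vs)%type.

Definition no_backtrack (i : I) (e : bool) (r : Vs) (l : seq syllable) : Prop :=
  if l is (j, e', _) :: _ then ~ (j = i /\ e' = ~~ e /\ r = gone) else True.

Fixpoint reduced (l : seq syllable) : Prop :=
  if l is (i, e, r) :: l' then [/\ rep i e r = r, no_backtrack i e r l' & reduced l']
  else True.

Definition head_rep (l : seq syllable) : Vs := if l is (_, _, r) :: _ then r else gone.

Definition cancels (i : I) (e : bool) (r : Vs) (l : seq syllable) : Prop :=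
  if l is (j, e', _) :: _ then [/\ r = gone, j = i & e' = ~~ e] else False.

(* Left multiplication of a word by the letter t_i^e: write w = b * r with b
   in the edge group and r its coset representative, move b across the
   letter, and cancel the letter if it meets its inverse. *)
Definition push (i : I) (e : bool) (p : Vs * seq syllable) : Vs * seq syllable :=
  let r := rep i e p.1 in let b := p.1 * r^-1 in
  if excluded_middle_informative (cancels i e r p.2)
  then (transfer i e b * head_rep p.2, behead p.2)
  else (transfer i e b, (i, e, r) :: p.2).

Lemma push_reduced i e p : reduced p.2 -> reduced (push i e p).2.
Proof.
case: p => w l /= red; rewrite /push /=; case: excluded_middle_informative => C /=.
  by case: l red C => [|[[j e'] r] l'] //= [].
split=> //; first exact: rep_id.
by case: l red C => [|[[j e'] r] l'] //= _ C [? [? ?]]; apply: C.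
Qed.

Lemma pushK i e p : reduced p.2 -> push i (~~ e) (push i e p) = p.
Proof.
case: p => w l /= red; rewrite /push /=.
have bS := repP i e w; have tS := transfer_in bS.
case: excluded_middle_informative => C /=.
- case: l red C => [|[[j e'] r] l'] //= [rr nb red'] [r1 ji ee]; subst j e'.
  rewrite (rep_mull _ tS) rr /=.
  case: excluded_middle_informative => C2.
    by exfalso; case: l' nb red' C2 => [|[[j e'] r2] l''] //= nb _ [? ? ?]; apply: nb.
  by rewrite gmulgK transferK // r1 ginv1 gmulg1.
- rewrite (rep_in tS) ginv1 gmulg1.
  case: excluded_middle_informative => C2 /=; last by case: C2; rewrite negbK.
  by rewrite transferK // gmulgKV.
Qed.

Lemma push_mull i e s p : in_edge i e s ->
  push i e (s * p.1, p.2) = (transfer i e s * (push i e p).1, (push i e p).2).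
Proof.
case: p => w l Ss; rewrite /push /= (rep_mull _ Ss).
by case: excluded_middle_informative => C /=; rewrite -gmulA transferM ?gmulA //;
  apply: repP.
Qed.

Definition rword := {p : Vs * seq syllable | reduced p.2}.

Lemma rword_eq (a b : rword) : proj1_sig a = proj1_sig b -> a = b.
Proof. by case: a b => x p [y q] /= e; subst y; f_equal; apply: proof_irrelevance. Qed.

Definition push_rw i e (w : rword) : rword :=
  exist _ (push i e (proj1_sig w)) (push_reduced i e (proj2_sig w)).

Lemma push_rwK i e : cancel (push_rw i e) (push_rw i (~~ e)).
Proof. by move=> w; apply: rword_eq; rewrite /= pushK //; exact: (proj2_sig w). Qed.

Definition letter_bij (i : I) : Bij rword :=
  Bijection (push_rwK i true) (push_rwK i false).

Definition mul_rw (x : Vs) (w : rword) : rword :=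
  exist _ (x * (proj1_sig w).1, (proj1_sig w).2) (proj2_sig w).

Lemma mul_rwK x : cancel (mul_rw x) (mul_rw x^-1).
Proof. by move=> w; apply: rword_eq; rewrite /= gmulKg; case: (proj1_sig w). Qed.

Lemma mul_rwVK x : cancel (mul_rw x^-1) (mul_rw x).
Proof. by move=> w; apply: rword_eq; rewrite /= gmulKVg; case: (proj1_sig w). Qed.

Definition mul_bij (x : Vs) : Bij rword := Bijection (mul_rwK x) (mul_rwVK x).

Lemma mul_bij_hom : is_hom mul_bij.
Proof. by move=> x y; apply: bij_ext => w; apply: rword_eq; rewrite /= gmulA. Qed.

Lemma letter_rel i e :
  gconj (mul_bij (h i (f e))) (letter_bij i) = mul_bij (h (succ i) (g e)).
Proof.
apply: bij_ext => w /=.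
have Ss : in_edge i true (h (succ i) (g e)) by exists e.
have <- : push_rw i true (mul_rw (h (succ i) (g e)) w) =
          mul_rw (h i (f e)) (push_rw i true w).
  apply: rword_eq; rewrite /= push_mull //.
  by rewrite -[h _ (g e)]/(edge_emb i true e) transfer_emb.
by rewrite (push_rwK i true).
Qed.

Variables (P : Grp) (jV : 'I_n.+1 -> V -> P) (tP : P) (HP : is_cycle_pi1 f g jV tP).
Variables (G : Grp) (iW : Vs -> G) (tG : 'I_n.+1 -> G) (HG : is_rose_pi1 f g h iW tG).
Let jV_hom : forall i, is_hom (jV i). Proof. by case: HP. Qed.
Let jV_tree : forall (i : I) e, i != ord_max -> jV i (f e) = jV (succ i) (g e).
Proof. by case: HP => _ []. Qed.
Let jV_stable : forall e, gconj (jV ord_max (f e)) tP = jV (succ ord_max) (g e).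
Proof. by case: HP => _ [_ []]. Qed.
Let iW_hom : is_hom iW. Proof. by case: HG. Qed.
Let iW_rel : forall i e, gconj (iW (h i (f e))) (tG i) = iW (h (succ i) (g e)).
Proof. by case: HG => _ []. Qed.

Fixpoint tpath (m : nat) : G := if m is m'.+1 then tpath m' * tG (inord m') else gone.

Definition psi_gen (i : I) (v : V) : G := tpath i * iW (h i v) * (tpath i)^-1.

Lemma psi_exists : exists Psi : P -> G,
  [/\ is_hom Psi, forall i v, Psi (jV i v) = psi_gen i v & Psi tP = tpath n * tG ord_max].
Proof.
have tG_fg i e : tG i * iW (h (succ i) (g e)) * (tG i)^-1 = iW (h i (f e)).
  by rewrite -iW_rel /gconj; gnorm.
apply: (cycle_lift HP (phi := psi_gen)); rewrite /psi_gen.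
- by move=> i x y; rewrite h_hom iW_hom; gnorm.
- by move=> i e ne; rewrite succ_lt //= inord_val -(tG_fg i e); gnorm.
- move=> e; rewrite succ_max /gconj /=.
  by have := iW_rel ord_max e; rewrite succ_max /gconj => <-; gnorm.
Qed.

(* A word is based at the vertex c when
   its letters form a path in the cycle starting at c and each entry lies in
   the image of the vertex group it sits at; it then decodes to the
   corresponding product in Pi_k, where the letter t_i^e becomes trivial for
   a tree edge and the stable letter tP^e for the edge (k-1, 0). *)
Definition vpre (c : I) (w : Vs) : V := preim gone (h c) w.
Definition in_vertex (c : I) (w : Vs) : Prop := exists v, h c v = w.

Lemma vpreK c v : vpre c (h c v) = v.
Proof. exact: preimK. Qed.

Fixpoint based_list (c : I) (l : seq syllable) : Prop :=
  if l is (i, e, r) :: l'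
  then [/\ src i e = c, in_vertex (dst i e) r & based_list (dst i e) l']
  else True.

Definition based (c : I) (p : Vs * seq syllable) : Prop :=
  in_vertex c p.1 /\ based_list c p.2.

Definition edge_elt (i : I) (e : bool) : P :=
  if i == ord_max then (if e then tP else tP^-1) else gone.

Fixpoint decode_list (l : seq syllable) : P :=
  if l is (i, e, r) :: l'
  then edge_elt i e * (jV (dst i e) (vpre (dst i e) r) * decode_list l')
  else gone.

Definition decode (c : I) (p : Vs * seq syllable) : P :=
  jV c (vpre c p.1) * decode_list p.2.

Lemma edge_elt_neg i e : edge_elt i (~~ e) = (edge_elt i e)^-1.
Proof. by rewrite /edge_elt; case: eqP => _; case: e; rewrite ?ginvK ?ginv1. Qed.

Lemma edge_elt_tree i e : i != ord_max -> edge_elt i e = gone.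
Proof. by rewrite /edge_elt => /negPf ->. Qed.

Lemma edge_elt_rel i e x :
  jV (src i e) (fv (~~ e) x) * edge_elt i e = edge_elt i e * jV (dst i e) (fv e x).
Proof.
rewrite /edge_elt /src /dst; case: eqP => [->|/eqP ne]; case: e => /=.
- by rewrite -jV_stable /gconj; gnorm.
- by rewrite -jV_stable /gconj; gnorm.
- by rewrite gmulg1 gmul1 jV_tree.
- by rewrite gmulg1 gmul1 jV_tree.
Qed.

Lemma decode_push i e p : based (dst i e) p ->
  based (src i e) (push i e p) /\
  decode (src i e) (push i e p) = edge_elt i e * decode (dst i e) p.
Proof.
case: p => w l [[u hu] bl]; rewrite /= in hu bl.
set d := dst i e.
have [x hx] := repP i e w; set r := rep i e w in hx.
have hr : r = h d ((fv e x)^-1 * u).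
  by rewrite h_hom (homV (h_hom _)) -[h d (fv e x)]/(edge_emb i e x) hx hu; gnorm.
have htr : transfer i e (w * r^-1) = h (src i e) (fv (~~ e) x).
  by rewrite -hx transfer_emb /edge_emb dst_neg.
rewrite /push /=; fold r; case: excluded_middle_informative => C.
- case: l bl C => [|[[j e'] r1] l'] //= [_ [u1 hu1] bl'] [r0 ji ee]; subst j e'.
  rewrite dst_neg in hu1 bl'.
  move: htr; rewrite r0 ginv1 gmulg1 => htr.
  have eu : u = fv e x.
    apply: (h_inj (i := d)).
    by rewrite hu -[h d (fv e x)]/(edge_emb i e x) hx r0 ginv1 gmulg1.
  split.
    by split=> //; exists (fv (~~ e) x * u1); rewrite h_hom htr hu1.
  rewrite /decode /= htr -hu1 -h_hom !vpreK -hu !vpreK dst_neg eu edge_elt_neg jV_hom.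
  by rewrite vpreK !gmulA -edge_elt_rel gmulgK.
- split.
    by split; [exists (fv (~~ e) x) | split=> //; exists ((fv e x)^-1 * u)].
  rewrite /decode /= htr hr -hu !vpreK; fold d; rewrite jV_hom.
  by rewrite (homV (jV_hom d)) gmulA edge_elt_rel; gnorm.
Qed.

Lemma decode_mul c v p : based c p ->
  based c (h c v * p.1, p.2) /\ decode c (h c v * p.1, p.2) = jV c v * decode c p.
Proof.
case: p => w l [[u hu] bl]; split; first by split=> //; exists (v * u); rewrite h_hom hu.
by rewrite /= in hu bl; rewrite /decode /= -hu -h_hom !vpreK jV_hom gmulA.
Qed.

Variables (Psi : P -> G) (Psi_hom : is_hom Psi)
  (Psi_jV : forall i v, Psi (jV i v) = psi_gen i v)
  (Psi_tP : Psi tP = tpath n * tG ord_max).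

(* Injectivity of Psi: through the action of G_* on reduced words, Psi(x)
   multiplies the decoding of every word based at 0 by x on the left. *)
Section PsiInjective.
Variables (rG : G -> Bij rword) (rG_hom : is_hom rG)
  (rG_iW : forall w, rG (iW w) = mul_bij w) (rG_tG : forall i, rG (tG i) = letter_bij i).

Definition based_rw (c : I) (w : rword) : Prop := based c (proj1_sig w).
Definition decode_rw (c : I) (w : rword) : P := decode c (proj1_sig w).

Lemma rG1 w : bfun (rG gone) w = w.
Proof. by rewrite (hom1 rG_hom). Qed.

Lemma rGM x y w : bfun (rG (x * y)) w = bfun (rG x) (bfun (rG y) w).
Proof. by rewrite rG_hom. Qed.

Lemma rGV x w : bfun (rG x^-1) w = binv (rG x) w.
Proof. by rewrite (homV rG_hom). Qed.

(* tpath m carries words based at m to words based at 0, with the same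
   decoding (the letters t_0, ..., t_(m-1) are tree edges). *)
Lemma decode_tpath m : (m <= n)%N -> forall w, based_rw (inord m) w ->
  based_rw ord0 (bfun (rG (tpath m)) w) /\
  decode_rw ord0 (bfun (rG (tpath m)) w) = decode_rw (inord m) w.
Proof.
elim: m => [|m IH] le w bw /=.
  by move: bw; rewrite rG1 inord0.
have := @decode_push (inord m) true (proj1_sig w).
rewrite /= succ_inord // => /(_ bw) [b1 d1].
have [b2 d2] := IH (ltnW le) (push_rw (inord m) true w) b1.
rewrite rGM rG_tG; split=> //; rewrite d2 /decode_rw /= d1 edge_elt_tree ?gmul1 //.
exact: inord_lt_max.
Qed.

Lemma decode_tpathV m : (m <= n)%N -> forall w, based_rw ord0 w ->
  based_rw (inord m) (bfun (rG (tpath m)^-1) w) /\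
  decode_rw (inord m) (bfun (rG (tpath m)^-1) w) = decode_rw ord0 w.
Proof.
elim: m => [|m IH] le w bw /=.
  by rewrite ginv1 rG1 inord0.
rewrite ginvM rGM rGV rG_tG.
have [b1 d1] := IH (ltnW le) _ bw.
have := @decode_push (inord m) false _ b1; rewrite /= succ_inord // => -[b2 d2].
split=> //; rewrite /decode_rw d2 edge_elt_tree ?gmul1 //; exact: inord_lt_max.
Qed.

Definition acts_as_mul (x : P) : Prop := forall w, based_rw ord0 w ->
  based_rw ord0 (bfun (rG (Psi x)) w) /\
  decode_rw ord0 (bfun (rG (Psi x)) w) = x * decode_rw ord0 w.

Lemma acts_as_mulM x y : acts_as_mul x -> acts_as_mul y -> acts_as_mul (x * y).
Proof.
move=> Ax Ay w bw; rewrite Psi_hom rGM.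
have [b1 d1] := Ay w bw; have [b2 d2] := Ax _ b1.
by split=> //; rewrite d2 d1 gmulA.
Qed.

Lemma acts_as_mul_jV i v : acts_as_mul (jV i v).
Proof.
move=> w bw; rewrite Psi_jV /psi_gen !rGM.
have le : (i <= n)%N by rewrite -ltnS.
have [b1 d1] := decode_tpathV le bw; rewrite inord_val in b1 d1.
have [b2 d2] := @decode_mul i v _ b1.
have b2' : based_rw (inord i) (bfun (rG (iW (h i v))) (bfun (rG (tpath i)^-1) w)).
  by rewrite rG_iW inord_val.
have [b3 d3] := decode_tpath le b2'.
by split=> //; rewrite d3 inord_val /decode_rw rG_iW /= d2; congr gmul.
Qed.

Lemma acts_as_mul_tP : acts_as_mul tP.
Proof.
move=> w bw; rewrite Psi_tP rGM rG_tG.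
have := @decode_push ord_max true (proj1_sig w); rewrite /= succ_max => /(_ bw) [b1 d1].
have b1' : based_rw (inord n) (push_rw ord_max true w) by rewrite inord_max.
have [b2 d2] := decode_tpath (leqnn n) b1'.
by split=> //; rewrite d2 inord_max /decode_rw /= d1 /edge_elt eqxx.
Qed.

Lemma acts_as_mul_tPV : acts_as_mul tP^-1.
Proof.
move=> w bw; rewrite (homV Psi_hom) Psi_tP ginvM rGM rGV rG_tG.
have [b1 d1] := decode_tpathV (leqnn n) bw; rewrite inord_max in b1 d1.
have := @decode_push ord_max false _ b1; rewrite /= succ_max => -[b2 d2].
by split=> //; move: d1; rewrite /decode_rw /= => d1; rewrite d2 d1 /edge_elt eqxx.
Qed.

Lemma acts_as_mulP x : acts_as_mul x.
Proof.
suff : acts_as_mul x /\ acts_as_mul x^-1 by case.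
move: x; apply: (cycle_ind HP).
- have one : acts_as_mul gone by move=> w bw; rewrite (hom1 Psi_hom) rG1 gmul1.
  by rewrite ginv1.
- move=> x y [Ax Ax'] [Ay Ay']; split; first exact: acts_as_mulM.
  by rewrite ginvM; apply: acts_as_mulM.
- by move=> x [Ax Ax']; rewrite ginvK.
- move=> i v; split; first exact: acts_as_mul_jV.
  by rewrite -(homV (jV_hom i)); apply: acts_as_mul_jV.
- by split; [apply: acts_as_mul_tP | apply: acts_as_mul_tPV].
Qed.

Definition empty_rw : rword := exist _ (gone, [::]) Logic.I.

Lemma rG_Psi_inj : injective Psi.
Proof.
have b0 : based_rw ord0 empty_rw by split=> //; exists gone; rewrite (hom1 (h_hom _)).
have d0 : decode_rw ord0 empty_rw = gone.
  by rewrite /decode_rw /decode /= -(hom1 (h_hom ord0)) vpreK (hom1 (jV_hom _)) gmulg1.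
move=> x y e; have [_ dx] := acts_as_mulP x b0; have [_ dy] := acts_as_mulP y b0.
by rewrite -(gmulg1 x) -(gmulg1 y) -d0 -dx -dy e.
Qed.
End PsiInjective.

Lemma Psi_injective : injective Psi.
Proof.
have [rG [rG_hom rG_iW rG_tG]] := rose_lift HG mul_bij_hom letter_rel.
exact: (rG_Psi_inj rG_hom rG_iW rG_tG).
Qed.
End RoseEmbedding.

Lemma cycle_embeds_rose (n : nat) (V E Vs : Grp) (f g : E -> V)
    (f_hom : is_hom f) (g_hom : is_hom g) (f_inj : injective f) (g_inj : injective g)
    (h : 'I_n.+1 -> V -> Vs) (h_hom : forall i, is_hom (h i))
    (h_inj : forall i, injective (h i))
    (P : Grp) (jV : 'I_n.+1 -> V -> P) (tP : P) (HP : is_cycle_pi1 f g jV tP)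
    (G : Grp) (iW : Vs -> G) (tG : 'I_n.+1 -> G) (HG : is_rose_pi1 f g h iW tG) :
  exists Psi : P -> G, is_hom Psi /\ injective Psi.
Proof.
have [Psi [Psi_hom Psi_jV Psi_tP]] := psi_exists h_hom HP HG.
exists Psi; split=> //.
exact: (Psi_injective f_hom g_hom f_inj g_inj h_hom h_inj HP HG Psi_hom Psi_jV Psi_tP).
Qed.

Lemma transport_embedding (P H G : Grp) (phi : P -> H) (Psi : P -> G) (K : H -> Prop) :
  is_hom phi -> injective phi -> (forall x, K x <-> exists y, phi y = x) ->
  is_hom Psi -> injective Psi ->
  exists psi : H -> G,
    (forall x y, K x -> K y -> psi (x * y) = psi x * psi y) /\
    (forall x y, K x -> K y -> psi x = psi y -> x = y).
Proof.
move=> phi_hom phi_inj phi_im Psi_hom Psi_inj.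
exists (fun x => Psi (preim gone phi x)); split.
- move=> x y /phi_im [a <-] /phi_im [b <-].
  by rewrite -phi_hom !preimK // Psi_hom.
- move=> x y /phi_im [a <-] /phi_im [b <-].
  by rewrite !preimK // => /Psi_inj ->.
Qed.

Theorem lemma3 (n : nat) (V E Vs : Grp) (f g : E -> V) (h : 'I_n.+1 -> V -> Vs)
  (Hf : is_hom f) (Hg : is_hom g) (Hfi : injective f) (Hgi : injective g)
  (Hh : forall i, is_hom (h i)) (Hhi : forall i, injective (h i))
  (H : Grp) (iV : V -> H) (t : H) (HH : is_HNN f g iV t)
  (rho : H -> Zk n) (Hrho : is_hom rho)
  (Hrho0 : forall v, rho (iV v) = 0%R) (Hrho1 : rho t = Zp1)
  (P : Grp) (jV : 'I_n.+1 -> V -> P) (tP : P) (HP : is_cycle_pi1 f g jV tP)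
  (G : Grp) (iW : Vs -> G) (tG : 'I_n.+1 -> G) (HG : is_rose_pi1 f g h iW tG) :
  (exists phi : P -> H,
      [/\ is_hom phi, injective phi &
          forall x : H, rho x = 0%R <-> exists y, phi y = x]) /\
  (exists psi : H -> G,
      (forall x y : H, rho x = 0%R -> rho y = 0%R -> psi (gmul x y) = gmul (psi x) (psi y)) /\
      (forall x y : H, rho x = 0%R -> rho y = 0%R -> psi x = psi y -> x = y)).
Proof.
have [phi [phi_hom phi_inj phi_im]] := kernel_iso HP HH Hrho Hrho0 Hrho1.
have [Psi [Psi_hom Psi_inj]] := cycle_embeds_rose Hf Hg Hfi Hgi Hh Hhi HP HG.
split; first by exists phi.
exact: transport_embedding phi_hom phi_inj phi_im Psi_hom Psi_inj.
Qed.
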